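(* Let $r$ and $m$ be positive integers. For any integers $b_1,\dots,b_m$, there are at least $r/m$ elements $x\in\{0,1,\dots,r-1\}$ satisfying $$\left|\sum_{i=1}^{m}\omega_r^{x b_i}\right|\geq \frac12 .$$
   Context: $\omega_r=e^{2\pi i/r}$. *)

From HB Require Import structures.
From mathcomp Require Import all_boot all_order all_algebra.
From mathcomp Require Import complex.
From mathcomp Require Import all_classical all_reals all_analysis.
Set Implicit Arguments. Unset Strict Implicit. Unset Printing Implicit Defensive.
Import Order.TTheory GRing.Theory Num.Theory.
Local Open Scope ring_scope.
Local Open Scope complex_scope.

Definition expi (R : realType) (t : R) : R[i] := (cos t +i* sin t)%C.

(* omega_r = e^{2 pi i / r};  root_pow r k = omega_r ^ k  for an integer k *)
Definition root_pow (R : realType) (r : nat) (k : int) : R[i] :=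
  expi (2 * pi * k%:~R / r%:R).

(* Write S(x) = sum_i w^(x b_i) with w = omega_r, and D(s) for the number of
   pairs (i, j) with b_i - b_j + s = 0 mod r.  Orthogonality of the characters
   of Z/rZ gives sum_x |S(x)|^2 w^(xs) = r D(s); hence sum_x |S(x)|^2 = r D(0),
   sum_x |S(x)|^4 = r sum_(i,j) D(b_i - b_j), and D(s) <= D(0), with equality
   only if w^(xs) = 1 whenever S(x) <> 0.
   Let A be the set of x with |S(x)| >= 1/2 and suppose |A| m < r.  Since
   |S|^2 <= 1/4 off A, comparing the second and fourth moments forces an i
   such that D(b_i - b_j) = D(0) for more than half of the j.  Whenever
   S(x) <> 0 these b_j all contribute the same root of unity as b_i, so
   |S(x)| >= 1.  Thus |S|^2 vanishes off A, and r m <= r D(0) <= |A| m^2,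
   a contradiction. *)
From HB Require Import structures.
From mathcomp Require Import all_boot all_order all_algebra.
From mathcomp Require Import complex.
From mathcomp Require Import all_classical all_reals all_analysis.
From mathcomp Require Import ring lra zify.
Set Implicit Arguments. Unset Strict Implicit. Unset Printing Implicit Defensive.
Import Order.TTheory GRing.Theory Num.Theory.
Local Open Scope complex_scope.
Local Open Scope ring_scope.

(* Cauchy-Schwarz on A in tangent-line form: f^2 >= 2 t f - t^2. *)
Lemma sum_sqr_ge_tangent (R : realFieldType) (T : finType) (A : {set T})
    (f : T -> R) (c t : R) :
  0 <= c -> 0 <= t -> (forall x, x \notin A -> f x <= c) ->
  t * (\sum_x f x - #|T|%:R * c) *+ 2 - #|A|%:R * t ^+ 2 <= \sum_x f x ^+ 2.
Proof.
move=> c_ge0 t_ge0 f_le.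
have out_le : \sum_(x in ~: A) f x <= #|T|%:R * c.
  apply: le_trans (_ : \sum_(x in ~: A) c <= _).
    by apply: ler_sum => x; rewrite inE; apply: f_le.
  by rewrite sumr_const mulr_natl ler_wpMn2l // max_card.
have tangent : \sum_(x in A) (t * f x *+ 2 - t ^+ 2) <= \sum_(x in A) f x ^+ 2.
  by apply: ler_sum => x _; have := sqr_ge0 (f x - t); rewrite sqrrB; lra.
have in_le : \sum_(x in A) f x ^+ 2 <= \sum_x f x ^+ 2.
  rewrite [X in _ <= X](bigID (mem A)) /= lerDl.
  by apply: sumr_ge0 => x _; apply: sqr_ge0.
have tangent_sum : \sum_(x in A) (t * f x *+ 2 - t ^+ 2)
    = t * (\sum_(x in A) f x) *+ 2 - #|A|%:R * t ^+ 2.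
  by rewrite sumrB sumr_const sumrMnl -mulr_sumr mulr_natl.
have f_split : \sum_x f x = \sum_(x in A) f x + \sum_(x in ~: A) f x.
  by rewrite (bigID (mem A)) /=; congr (_ + _); apply: eq_bigl => x; rewrite !inE.
have := ler_wpM2l t_ge0 (_ : \sum_x f x - #|T|%:R * c <= \sum_(x in A) f x).
by move=> /(_ ltac:(lra)); rewrite tangent_sum in tangent; lra.
Qed.

Lemma sum_le_sparse_max (J : finType) (D : J -> nat) (E : nat) :
    (forall j, D j <= E)%N -> (2 * #|[set j | D j == E]| <= #|J|)%N ->
  (2 * \sum_j D j + #|J| <= 2 * #|J| * E)%N.
Proof.
move=> D_le sparse.
have : (\sum_j D j + #|J| <= #|J| * E + #|[set j | D j == E]|)%N.
  have -> : #|[set j | D j == E]| = (\sum_j (D j == E))%N.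
    by rewrite -sum1_card big_mkcond /=; apply: eq_bigr => j _; rewrite inE.
  rewrite -sum_nat_const -sum1_card -!big_split /=.
  by apply: leq_sum => j _; have := D_le j; case: eqP => [->|/eqP]; lia.
lia.
Qed.

Lemma sqr_norm1B (C : numClosedFieldType) (w : C) :
  `|w| = 1 -> `|1 - w| ^+ 2 = (1 - w) + (1 - w)^*.
Proof.
move=> w_norm1; have w_unit : w * w^* = 1 by rewrite -normCK w_norm1 expr1n.
rewrite normCK rmorphB /= conjC1.
have -> : (1 - w) * (1 - w^*) = 1 - w - w^* + w * w^* by ring.
by rewrite w_unit; ring.
Qed.

Section ComplexExponential.
Variable R : realType.

Lemma expiD (s t : R) : expi (s + t) = expi s * expi t.
Proof.
rewrite /expi; apply/eqP; rewrite eq_complex /= cosD sinD.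
by apply/andP; split; apply/eqP; ring.
Qed.

Lemma expi0 : expi (0 : R) = 1.
Proof. by rewrite /expi cos0 sin0. Qed.

Lemma conj_expi (t : R) : (expi t)^* = expi (- t).
Proof. by rewrite /expi cosN sinN. Qed.

Lemma norm_expi (t : R) : `|expi t| = 1.
Proof.
have : `|expi t| ^+ 2 = 1 by rewrite normCK conj_expi -expiD subrr expi0.
by move/eqP; rewrite sqrp_eq1 // => /eqP.
Qed.

Lemma expi_2piz (n : int) : expi (2 * pi * n%:~R) = 1 :> R[i].
Proof.
have expi_2pin (k : nat) : expi (2 * pi * k%:R) = 1 :> R[i].
  have -> : 2 * pi * k%:R = 0 + (pi *+ 2) *+ k :> R.
    by rewrite add0r -mulrnA -[in RHS]mulr_natr natrM; ring.
  by rewrite /expi (periodicn (@cosD2pi R)) (periodicn (@sinD2pi R)) cos0 sin0.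
case: n => k; first exact: expi_2pin.
by rewrite NegzE intrN mulrN -conj_expi expi_2pin conjC1.
Qed.

Lemma cos_lt1 (t : R) : 0 < t < pi *+ 2 -> cos t < 1.
Proof.
move=> /andP[t_gt0 t_lt2pi]; have pi_gt0 := pi_gt0 R.
rewrite mulr2n in t_lt2pi; rewrite -cos0.
have [t_lepi | pi_ltt] := lerP t pi.
  by rewrite ltr_cos ?in_itv /=; lra.
rewrite -[t](subrK (pi *+ 2)) cosD2pi -cosN opprB mulr2n.
by rewrite ltr_cos ?in_itv /=; lra.
Qed.

End ComplexExponential.

Section RootsOfUnity.
Variables (R : realType) (r : nat).
Hypothesis r_gt0 : (0 < r)%N.
Local Notation omega := (root_pow R r).

Lemma root_powD (k l : int) : omega (k + l) = omega k * omega l.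
Proof. by rewrite /root_pow intrD mulrDr mulrDl expiD. Qed.

Lemma root_pow0 : omega 0 = 1.
Proof. by rewrite /root_pow mulr0 mul0r expi0. Qed.

Lemma conj_root_pow (k : int) : (omega k)^* = omega (- k).
Proof. by rewrite /root_pow conj_expi intrN mulrN mulNr. Qed.

Lemma norm_root_pow (k : int) : `|omega k| = 1.
Proof. exact: norm_expi. Qed.

Lemma root_pow_natM (x : nat) (k : int) : omega (x%:Z * k) = omega k ^+ x.
Proof.
elim: x => [|x IHx]; first by rewrite mul0r root_pow0 expr0.
by rewrite -addn1 PoszD mulrDl mul1r root_powD IHx exprD expr1.
Qed.

Lemma root_pow_Mr (n : int) : omega (n * r%:Z) = 1.
Proof.
have r_neq0 : (r%:R : R) != 0 by rewrite pnatr_eq0 -lt0n.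
rewrite /root_pow; have -> : 2 * pi * (n * r%:Z)%:~R / r%:R = 2 * pi * n%:~R :> R.
  by rewrite intrM -pmulrn; field.
exact: expi_2piz.
Qed.

Lemma root_pow_modz (k : int) : omega k = omega (k %% r)%Z.
Proof. by rewrite {1}(divz_eq k r) root_powD root_pow_Mr mul1r. Qed.

Lemma root_pow_nat_neq1 (n : nat) : (0 < n < r)%N -> omega n%:Z != 1.
Proof.
move=> /andP[n_gt0 n_ltr]; apply/eqP => /(congr1 (@complex.Re R)) /= cos_eq1.
suff : cos (2 * pi * n%:R / r%:R) < 1 :> R by rewrite cos_eq1 ltxx.
apply: cos_lt1; have pi_gt0 := pi_gt0 R.
have r_pos : (0 : R) < r%:R by rewrite ltr0n.
have n_pos : (0 : R) < n%:R by rewrite ltr0n.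
have n_ltr' : (n%:R : R) < r%:R by rewrite ltr_nat.
by rewrite divr_gt0 ?mulr_gt0 //= ltr_pdivrMr // mulr2n; nra.
Qed.

Lemma root_pow_eq1 (k : int) : (omega k == 1) = (r%:Z %| k)%Z.
Proof.
apply/idP/idP => [|/dvdz_mod0P k_mod]; last by rewrite root_pow_modz k_mod root_pow0.
apply: contraLR => k_ndvd; rewrite root_pow_modz.
have : (0 <= k %% r)%Z by rewrite modz_ge0 // eqz_nat -lt0n.
have : (k %% r < r)%Z by rewrite ltz_pmod.
have : (k %% r)%Z != 0 by apply: contra k_ndvd => /eqP/dvdz_mod0P.
case: (k %% r)%Z => // n n_neq0 n_ltr _.
by rewrite root_pow_nat_neq1 // lt0n n_neq0.
Qed.

Lemma sum_root_pow (k : int) :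
  \sum_(x < r) omega (x%:Z * k) = if (r%:Z %| k)%Z then r%:R else 0.
Proof.
have omega_r : omega k ^+ r = 1.
  by apply/eqP; rewrite -root_pow_natM root_pow_eq1 dvdz_mulr ?dvdzz.
under eq_bigr do rewrite root_pow_natM.
case: ifP => [k_dvd | k_ndvd].
  have /eqP-> : omega k == 1 by rewrite root_pow_eq1.
  by under eq_bigr do rewrite expr1n; rewrite sumr_const card_ord.
have omega_k_neq1 : omega k != 1 by rewrite root_pow_eq1 k_ndvd.
have := subrX1 (omega k) r; rewrite omega_r subrr => /esym/eqP.
by rewrite mulf_eq0 subr_eq0 (negbTE omega_k_neq1) => /eqP.
Qed.

End RootsOfUnity.

Section ExponentialSums.
Variables (R : realType) (r : nat) (I : finType) (b : I -> int).
Hypothesis r_gt0 : (0 < r)%N.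
Local Notation omega := (root_pow R r).
Local Notation m := #|I|.

Definition expsum (x : nat) : R[i] := \sum_i omega (x%:Z * b i).

Definition sqnormS (x : nat) : R := complex.Re (`|expsum x| ^+ 2).

Definition diff_count (s : int) : nat :=
  #|[set p : I * I | (r%:Z %| b p.1 - b p.2 + s)%Z]|.

Definition periodic_partners i : {set I} :=
  [set j | diff_count (b i - b j) == diff_count 0].

Lemma sqnormS_normC x : (sqnormS x)%:C = `|expsum x| ^+ 2.
Proof. by rewrite RRe_real // rpredX // normr_real. Qed.

Lemma sqnormSE x : (sqnormS x)%:C = expsum x * (expsum x)^*.
Proof. by rewrite sqnormS_normC normCK. Qed.

Lemma sqnormS_ge0 x : 0 <= sqnormS x.
Proof. by rewrite -ler0c sqnormS_normC exprn_ge0. Qed.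

Lemma expsum_mul_conj x :
  expsum x * (expsum x)^* = \sum_i \sum_j omega (x%:Z * (b i - b j)).
Proof.
rewrite /expsum rmorph_sum mulr_suml; apply: eq_bigr => i _.
rewrite mulr_sumr; apply: eq_bigr => j _.
by rewrite /= conj_root_pow -root_powD mulrBr.
Qed.

Lemma moment_identity s :
  \sum_(x < r) (sqnormS x)%:C * omega (x%:Z * s) = (r * diff_count s)%:R.
Proof.
under eq_bigr do rewrite sqnormSE expsum_mul_conj mulr_suml.
under eq_bigr do under eq_bigr do rewrite mulr_suml.
under eq_bigr do under eq_bigr do under eq_bigr do rewrite -root_powD -mulrDr.
rewrite exchange_big; under eq_bigr do rewrite exchange_big.
under eq_bigr do under eq_bigr do rewrite sum_root_pow //.
rewrite pair_bigA /= -big_mkcond /= sumr_const /diff_count cardsE.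
by rewrite natrM mulr_natr.
Qed.

Lemma sum_sqnormS_C : \sum_(x < r) (sqnormS x)%:C = (r * diff_count 0)%:R.
Proof.
rewrite -moment_identity; apply: eq_bigr => x _.
by rewrite mulr0 root_pow0 mulr1.
Qed.

Lemma sum_sqnormS : \sum_(x < r) sqnormS x = (r * diff_count 0)%:R.
Proof. by apply: (@complexI R); rewrite rmorph_sum rmorph_nat sum_sqnormS_C. Qed.

Lemma sum_sqnormS2 :
  \sum_(x < r) sqnormS x ^+ 2 = (r * \sum_i \sum_j diff_count (b i - b j))%:R.
Proof.
apply: (@complexI R); rewrite rmorph_sum /= rmorph_nat.
have sqr_expand (x : nat) : (sqnormS x ^+ 2)%:C =
    \sum_i \sum_j (sqnormS x)%:C * omega (x%:Z * (b i - b j)).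
  rewrite rmorphXn expr2 [X in _ * X]sqnormSE expsum_mul_conj mulr_sumr.
  by apply: eq_bigr => i _; rewrite mulr_sumr.
under eq_bigr do rewrite sqr_expand.
rewrite exchange_big; under eq_bigr do rewrite exchange_big.
under eq_bigr do under eq_bigr do rewrite moment_identity.
rewrite natrM natr_sum mulr_sumr; apply: eq_bigr => i _.
by rewrite natr_sum mulr_sumr; apply: eq_bigr => j _; rewrite natrM.
Qed.

Lemma diff_count_defect s :
  ((r * diff_count 0)%:R - (r * diff_count s)%:R) *+ 2
  = \sum_(x < r) (sqnormS x)%:C * `|1 - omega (x%:Z * s)| ^+ 2.
Proof.
set D := (_ - _ : R[i]).
have D_sum : D = \sum_(x < r) (sqnormS x)%:C * (1 - omega (x%:Z * s)).
  rewrite /D -sum_sqnormS_C -moment_identity -sumrB.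
  by apply: eq_bigr => x _; rewrite mulrBr mulr1.
under eq_bigr do rewrite sqr_norm1B ?norm_root_pow // mulrDr.
rewrite big_split /= -D_sum mulr2n; congr (D + _).
have conj_D : D^* = D by rewrite /D rmorphB /= !conjC_nat.
rewrite -{1}conj_D D_sum rmorph_sum; apply: eq_bigr => x _ /=.
by rewrite rmorphM /= geC0_conj // sqnormS_normC exprn_ge0.
Qed.

Lemma diff_count_le s : (diff_count s <= diff_count 0)%N.
Proof.
have : (0 : R[i]) <= ((r * diff_count 0)%:R - (r * diff_count s)%:R) *+ 2.
  rewrite diff_count_defect; apply: sumr_ge0 => x _.
  by rewrite mulr_ge0 ?exprn_ge0 // ler0c sqnormS_ge0.
by rewrite pmulrn_lge0 // subr_ge0 ler_nat leq_pmul2l.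
Qed.

Lemma diff_count_eq s (x : 'I_r) :
  diff_count s = diff_count 0 -> sqnormS x != 0 -> omega (x%:Z * s) = 1.
Proof.
move=> ds_eq /negPf sqnormS_neq0; apply/eqP; rewrite eq_sym -subr_eq0.
have /eqP := diff_count_defect s; rewrite ds_eq subrr mul0rn eq_sym.
rewrite psumr_eq0 => [/allP/(_ x (mem_index_enum _))|y _]; last first.
  by rewrite mulr_ge0 ?exprn_ge0 // ler0c sqnormS_ge0.
by rewrite mulf_eq0 (inj_eq (@complexI R)) sqnormS_neq0 sqrf_eq0 normr_eq0.
Qed.

Lemma diff_count0_ge : (m <= diff_count 0)%N.
Proof.
have diag_inj : injective (fun i : I => (i, i)) by move=> i j [].
rewrite -(card_imset predT diag_inj) subset_leq_card //.
by apply/fintype.subsetP => _ /imsetP[i _ ->]; rewrite inE /= subrr dvdz0.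
Qed.

Lemma sqnormS_le x : sqnormS x <= m%:R ^+ 2.
Proof.
have norm_le : `|expsum x| <= m%:R.
  rewrite (le_trans (ler_norm_sum _ _ _)) //.
  by under eq_bigr do rewrite norm_root_pow; rewrite sumr_const.
rewrite -lecR sqnormS_normC rmorphXn rmorph_nat.
by rewrite lerXn2r ?nnegrE.
Qed.

Lemma sqnormS_lt x : `|expsum x| < 2^-1 -> sqnormS x < 4^-1.
Proof.
move=> norm_lt; rewrite -ltcR sqnormS_normC fmorphV rmorph_nat.
have -> : (4 : R[i]) ^-1 = 2^-1 ^+ 2 by rewrite exprVn -natrX.
by rewrite ltrXn2r ?nnegrE ?invr_ge0.
Qed.

Lemma sum_diff_count_sparse :
    (forall i, 2 * #|periodic_partners i| <= m)%N ->
  (2 * \sum_i \sum_j diff_count (b i - b j) + m * m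
     <= 2 * m * m * diff_count 0)%N.
Proof.
move=> sparse.
have : (\sum_i (2 * \sum_j diff_count (b i - b j) + m)
          <= \sum_(i : I) 2 * m * diff_count 0)%N.
  apply: leq_sum => i _; apply: sum_le_sparse_max => [j|].
    exact: diff_count_le.
  exact: sparse.
by rewrite big_split /= -big_distrr /= !sum_nat_const !cardT -cardT; lia.
Qed.

Lemma fourth_moment_ge (A : {set 'I_r}) :
    (0 < m)%N -> (#|A| * m <= r)%N ->
    (forall x, x \notin A -> sqnormS x <= 4^-1) ->
  m%:R * ((diff_count 0)%:R - 4^-1) ^+ 2
    <= (\sum_i \sum_j diff_count (b i - b j))%:R :> R.
Proof.
move=> m_gt0 A_small sqnormS_small.
set E := diff_count 0; set F := (\sum_i \sum_j _)%N; set u := E%:R - 4^-1.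
have m_ge1 : (1 : R) <= m%:R by rewrite ler1n.
have E_ge : (m%:R : R) <= E%:R by rewrite ler_nat diff_count0_ge.
have u_gt0 : 0 < u by rewrite /u; lra.
have A_small' : (#|A|%:R : R) * m%:R <= r%:R by rewrite -natrM ler_nat.
(* the tangent point t = m u makes the bound below sharp *)
have := sum_sqr_ge_tangent (c := 4^-1) (t := m%:R * u) _ _ sqnormS_small.
rewrite sum_sqnormS sum_sqnormS2 card_ord -/F => /(_ ltac:(lra) ltac:(nra)).
have -> : m%:R * u * ((r * E)%:R - r%:R * 4^-1) *+ 2 - #|A|%:R * (m%:R * u) ^+ 2
    = (r%:R *+ 2 - #|A|%:R * m%:R) * (m%:R * u ^+ 2) by rewrite natrM /u; ring.
move=> tangent.
rewrite -(ler_pM2l (_ : 0 < r%:R)) ?ltr0n // -natrM (le_trans _ tangent) //.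
by rewrite ler_wpM2r ?mulr_ge0 ?exprn_ge0 ?ler0n //; lra.
Qed.

Lemma exists_dense_partners (A : {set 'I_r}) :
    (0 < m)%N -> (#|A| * m <= r)%N ->
    (forall x, x \notin A -> sqnormS x <= 4^-1) ->
  exists i, (m < 2 * #|periodic_partners i|)%N.
Proof.
move=> m_gt0 A_small sqnormS_small.
have [[i dense]|no_dense] := pselect (exists i, m < 2 * #|periodic_partners i|)%N.
  by exists i.
have sparse i : (2 * #|periodic_partners i| <= m)%N.
  by rewrite leqNgt; apply/negP => dense; apply: no_dense; exists i.
have := fourth_moment_ge m_gt0 A_small sqnormS_small.
have := sum_diff_count_sparse sparse; have := diff_count0_ge.
set E := diff_count 0; set F := (\sum_i \sum_j _)%N.
rewrite -(ler_nat R) => E_ge; rewrite -(ler_nat R) !natrD !natrM => F_le F_ge.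
have m_ge1 : (1 : R) <= m%:R by rewrite ler1n.
have : 2 * (E%:R - 4^-1) ^+ 2 + m%:R <= 2 * m%:R * E%:R :> R.
  by rewrite -(ler_pM2l (_ : 0 < m%:R)) ?ltr0n //; nra.
have : 0 <= (E%:R - m%:R) * (2 * E%:R - 1) :> R by rewrite mulr_ge0 //; lra.
nra.
Qed.

Lemma sqnormS_dichotomy i (x : 'I_r) :
  (m < 2 * #|periodic_partners i|)%N -> sqnormS x = 0 \/ 1 <= sqnormS x.
Proof.
set J := periodic_partners i => dense.
have [->|sqnormS_neq0] := eqVneq (sqnormS x) 0; [by left | right].
have partner_eq j : j \in J -> omega (x%:Z * b j) = omega (x%:Z * b i).
  rewrite inE => /eqP /diff_count_eq /(_ sqnormS_neq0) period.
  by rewrite -[x%:Z * b i](subrK (x%:Z * b j)) -mulrBr root_powD period mul1r.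
have expsum_split :
    expsum x = omega (x%:Z * b i) *+ #|J| + \sum_(j in ~: J) omega (x%:Z * b j).
  rewrite /expsum (bigID (mem J)) /=; congr (_ + _).
    by rewrite -sumr_const; apply: eq_bigr => j /partner_eq.
  by apply: eq_bigl => j; rewrite !inE.
have rest_le : `|\sum_(j in ~: J) omega (x%:Z * b j)| <= #|~: J|%:R.
  rewrite (le_trans (ler_norm_sum _ _ _)) //.
  by under eq_bigr do rewrite norm_root_pow; rewrite sumr_const.
have norm_ge1 : 1 <= `|expsum x|.
  rewrite expsum_split (le_trans _ (lerB_normD _ _)) // normrMn norm_root_pow.
  rewrite (le_trans _ (lerB (lexx _) rest_le)) // lerBrDr nat1r ler_nat.
  by have := cardsC J; lia.
by rewrite -lecR sqnormS_normC rmorph1 exprn_ege1.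
Qed.

Lemma card_large_expsum :
  (0 < m)%N -> (r <= #|[set x : 'I_r | (2^-1 <= `|expsum x|)%R]| * m)%N.
Proof.
set A := [set x | _] => m_gt0.
have small_out x : x \notin A -> sqnormS x <= 4^-1.
  by rewrite inE -real_ltNge ?normr_real ?rpredV ?realn // => /sqnormS_lt/ltW.
have [//|A_small] := leqP r (#|A| * m).
have [i dense] := exists_dense_partners m_gt0 (ltnW A_small) small_out.
have zero_out x : x \notin A -> sqnormS x = 0.
  move=> /small_out x_small.
  by case: (sqnormS_dichotomy x dense) => // x_ge1; lra.
have : ((r * diff_count 0)%:R : R) <= #|A|%:R * m%:R ^+ 2.
  rewrite -sum_sqnormS (bigID (mem A)) /= [X in _ + X]big1 ?addr0; last first.
    by move=> x /zero_out.
  apply: le_trans (ler_sum _ (fun (x : 'I_r) _ => sqnormS_le x)) _.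
  by rewrite sumr_const mulr_natl.
rewrite -natrX -natrM ler_nat => moment_le.
have := leq_mul (leqnn r) diff_count0_ge.
by move: A_small; rewrite -(ltn_pmul2r m_gt0) -mulnA; lia.
Qed.

End ExponentialSums.

Theorem lemma1 (R : realType) (r m : nat) (hr : (0 < r)%N) (hm : (0 < m)%N)
    (b : 'I_m -> int) :
  (r%:R / m%:R : R) <=
  #|[set x : 'I_r | 2^-1 <= `|\sum_(i < m) root_pow R r (x%:Z * b i)|]|%:R.
Proof.
rewrite ler_pdivrMr ?ltr0n // -natrM ler_nat.
by have := @card_large_expsum R r _ b hr; rewrite card_ord; apply.
Qed.
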